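(* Consider RejectionSampling run on $P$ and $k$ with parameter $c>1$, and assume the LSH data structure is successful. In the first iteration in which a point is added to $S$ (i.e. when $S=\emptyset$), each point $x\in P$ is the point added with probability $1/n$. In every later step, given the current set $S\neq\emptyset$, the probability that the next point added to $S$ is $x\in P$ equals $\dfrac{\mathrm{Dist}(x,\mathrm{Query}(x))^2}{\sum_{y\in P}\mathrm{Dist}(y,\mathrm{Query}(y))^2}$, where Query is answered by the LSH data structure containing the points of $S$; in particular this probability does not depend on the random multi-tree embedding.
   Context: $P\subseteq\mathbb{R}^d$ has $n$ points; $\mathrm{Dist}(x,y)=\|x-y\|_2$, $\mathrm{Dist}(x,C)=\min_{y\in C}\mathrm{Dist}(x,y)$. Tree embedding: compute $\mathrm{MaxDist}$, an upper bound on the maximum pairwise distance within factor $2$ of it; add a uniformly random shift $s\in[0,\mathrm{MaxDist}]$ to each coordinate of all points; the root (height $0$) is the axis-aligned cube of side $2\,\mathrm{MaxDist}$ centered at an input point; recursively each node cube of side $L$ at height $i$ is split into $2^d$ subcubes of side $L/2$, nonempty ones becoming children connected by edges of weight $\sqrt d\,\mathrm{MaxDist}/2^i$, until each cube holds at most one point. $\mathrm{TreeDist}_T$ is the shortest-path distance in tree $T$; the multi-tree embedding has three such trees with independent shifts, $\mathrm{MultiTreeDist}$ is the minimum of the three tree distances, $\mathrm{MultiTreeDist}(p,S)=\min_{q\in S}\mathrm{MultiTreeDist}(p,q)$. MultiTreeSample() returns each $x\in P$ with probability $\mathrm{MultiTreeDist}(x,S)^2/\sum_{y\in P}\mathrm{MultiTreeDist}(y,S)^2$,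 where $S$ is the set of points opened so far by MultiTreeOpen (with $\mathrm{MultiTreeDist}(x,\emptyset)^2$ a constant $M$ independent of $x$). LSH data structure (parameter $c$): supports Insert$(p)$ and Query$(p)$; it is successful if Query$(p)$ always returns an inserted point at distance at most $c\cdot\delta$ from $p$, where $\delta$ is the minimum distance from $p$ to an inserted point. RejectionSampling$(P,k)$: $S\leftarrow\emptyset$; build the multi-tree embedding; while $|S|<k$: $x\leftarrow$ MultiTreeSample(); with probability $\min\{1,\mathrm{Dist}(x,\mathrm{Query}(x))^2/(c^2\,\mathrm{MultiTreeDist}(x,S)^2)\}$ (probability $1$ when $S=\emptyset$): $S\leftarrow S\cup\{x\}$, MultiTreeOpen$(x)$, Insert$(x)$. Output $S$. *)

From HB Require Import structures.
From mathcomp Require Import all_boot all_order all_algebra.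
From mathcomp Require Import all_classical all_reals all_analysis.
Set Implicit Arguments. Unset Strict Implicit. Unset Printing Implicit Defensive.
Import Order.TTheory GRing.Theory Num.Theory numFieldNormedType.Exports.
Local Open Scope classical_set_scope.
Local Open Scope ring_scope.

Section RS.
Variables (R : realType) (d : nat).
Local Notation pt := 'rV[R]_d.

Definition Dist (x y : pt) : R := Num.sqrt (\sum_(j < d) (x ord0 j - y ord0 j) ^+ 2).

(* minimum of f over a nonempty sequence (value on [::] is irrelevant: 0) *)
Definition seqmin (f : pt -> R) (S : seq pt) : R :=
  match S with
  | [::] => 0
  | q :: S' => foldr Num.min (f q) (map f S')
  end.

Definition DistSet (x : pt) (S : seq pt) : R := seqmin (Dist x) S.

Definition MaxDist_ok (P : seq pt) (Mx : R) : Prop :=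
  (forall x y, x \in P -> y \in P -> Dist x y <= Mx) /\
  (exists x y, [/\ x \in P, y \in P & Mx <= 2 * Dist x y]).

Section Tree.
Variables (P : seq pt) (Mx : R) (p0 s : pt).

Definition tree_param_ok : Prop :=
  p0 \in P /\ forall j, 0 <= s ord0 j <= Mx.

(* index of the cube of side 2 Mx / 2^i containing the shifted point x + s,
   on the grid whose origin is the corner of the root cube
   (of side 2 Mx, centred at p0 + s) *)
Definition cell (i : nat) (x : pt) : 'rV[int]_d :=
  \row_j Num.floor ((x ord0 j + s ord0 j - (p0 ord0 j + s ord0 j - Mx))
                    * 2 ^+ i / (2 * Mx)).

Definition same_node (i : nat) (x y : pt) : bool :=
  (i == 0)%N || (cell i x == cell i y).

Definition is_leaf (i : nat) (x : pt) : bool :=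
  all (fun y => (y == x) || ~~ same_node i x y) P.

Definition leaf_height (x : pt) : nat :=
  match pselect (exists i, is_leaf i x) with
  | left e => ex_minn e
  | right _ => 0%N
  end.

Definition edge_w (j : nat) : R := Num.sqrt (d%:R) * Mx / 2 ^+ j.

(* shortest-path distance between the leaves of x and y: the path uses the edge
   below height j on x's side iff j < leaf_height x and x, y are in different
   nodes at height j+1 (symmetrically for y) *)
Definition TreeDist (x y : pt) : R :=
  \sum_(j < leaf_height x) (~~ same_node j.+1 x y)%:R * edge_w j +
  \sum_(j < leaf_height y) (~~ same_node j.+1 x y)%:R * edge_w j.
End Tree.

(* multi-tree embedding: three trees, each given by (centre point, shift) *)
Definition MultiTreeDist (P : seq pt) (Mx : R) (t1 t2 t3 : pt * pt) (x y : pt) : R :=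
  Num.min (TreeDist P Mx t1.1 t1.2 x y)
    (Num.min (TreeDist P Mx t2.1 t2.2 x y) (TreeDist P Mx t3.1 t3.2 x y)).

Definition MTweight (P : seq pt) (Mx M0 : R) (t1 t2 t3 : pt * pt)
  (S : seq pt) (x : pt) : R :=
  if S is [::] then M0 else seqmin (MultiTreeDist P Mx t1 t2 t3 x) S ^+ 2.

Definition MTsample (P : seq pt) (Mx M0 : R) (t1 t2 t3 : pt * pt)
  (S : seq pt) (x : pt) : R :=
  MTweight P Mx M0 t1 t2 t3 S x / \sum_(y <- P) MTweight P Mx M0 t1 t2 t3 S y.

Definition accept_prob (P : seq pt) (Mx M0 c : R) (t1 t2 t3 : pt * pt)
  (Query : pt -> pt) (S : seq pt) (x : pt) : R :=
  if S is [::] then 1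
  else Num.min 1 (Dist x (Query x) ^+ 2 /
                  (c ^+ 2 * seqmin (MultiTreeDist P Mx t1 t2 t3 x) S ^+ 2)).

Definition lsh_successful (c : R) (S : seq pt) (Query : pt -> pt) : Prop :=
  forall p, Query p \in S /\ Dist p (Query p) <= c * DistSet p S.

(* Probability that the next point added to S (by the repeated independent
   trials "x <- sample; accept with probability acc x") is x equals p:
   sum over t of P(first t trials rejected) * P(trial t+1 draws and accepts x). *)
Definition next_added_prob (P : seq pt) (samp acc : pt -> R) (x : pt) (p : R) : Prop :=
  cvg_to ((fun N : nat => \sum_(t < N)
     (1 - \sum_(y <- P) samp y * acc y) ^+ t * (samp x * acc x)) @ \oo) (nbhs p).

End RS.

(* Each tree metric dominates the Euclidean one on P: if height i+1 is the
   first to separate x and y, they share a cube of side 2 MaxDist / 2^i at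
   height i, and the tree path between them uses both edges of weight
   sqrt(d) MaxDist / 2^i below that height.  With the LSH guarantee this gives
   Dist(y, Query y) <= c Dist(y, S) <= c MultiTreeDist(y, S), so the acceptance
   probability is never truncated at 1 and one trial adds y with probability
   Dist(y, Query y)^2 / (c^2 W), where W = sum_z MultiTreeDist(z, S)^2.  The
   point added is the outcome of the first successful trial, so its law is
   these probabilities renormalised, and W cancels.  For S empty every point
   is sampled with probability 1/n and always accepted. *)

From Pilot Require Import Defs.
From HB Require Import structures.
From mathcomp Require Import all_boot all_order all_algebra.
From mathcomp Require Import all_classical all_reals all_analysis.
From mathcomp.algebra_tactics Require Import ring lra.
Import Order.TTheory GRing.Theory Num.Theory numFieldNormedType.Exports.
Set Implicit Arguments. Unset Strict Implicit. Unset Printing Implicit Defensive.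
Local Open Scope classical_set_scope.
Local Open Scope ring_scope.

Section Distance.
Variables (R : realType) (d : nat).
Implicit Types x y : 'rV[R]_d.

Lemma Dist_ge0 x y : 0 <= Dist x y.
Proof. exact: sqrtr_ge0. Qed.

Lemma Dist_xx x : Dist x x = 0.
Proof. by rewrite /Dist big1 ?sqrtr0 // => j _; rewrite subrr expr0n. Qed.

Lemma coord_le_Dist x y (j : 'I_d) : `|x ord0 j - y ord0 j| <= Dist x y.
Proof.
rewrite /Dist -sqrtr_sqr ler_wsqrtr // (bigD1 j) //= lerDl.
by rewrite sumr_ge0 // => i _; rewrite sqr_ge0.
Qed.

Lemma Dist_gt0 x y : x != y -> 0 < Dist x y.
Proof.
move=> xy; rewrite lt_def Dist_ge0 andbT; apply: contra xy => /eqP D0.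
apply/eqP/rowP => j; apply/eqP; rewrite -subr_eq0 -normr_le0 -D0.
exact: coord_le_Dist.
Qed.

Lemma Dist_le_sqrt_dim x y (L : R) : 0 <= L ->
  (forall j, `|x ord0 j - y ord0 j| <= L) -> Dist x y <= Num.sqrt d%:R * L.
Proof.
move=> L_ge0 close; rewrite /Dist -(ger0_norm L_ge0) -sqrtr_sqr -sqrtrM ?ler0n //.
rewrite ler_wsqrtr // mulr_natl -[X in _ *+ X]card_ord -sumr_const ler_sum // => j _.
by have := close j; rewrite ler_norml => /andP[? ?]; nra.
Qed.

Lemma le_seqmin2 (f g : 'rV[R]_d -> R) (S : seq 'rV[R]_d) :
  {in S, forall s, f s <= g s} -> seqmin f S <= seqmin g S.
Proof.
case: S => [//|q S] /=; elim: S => [|a S IH] fg /=; first by rewrite fg ?mem_head.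
rewrite le_min2 ?fg ?(inE, eqxx, orbT) // IH // => s sS; apply: fg.
by move: sS; rewrite !inE => /orP[->|->]; rewrite ?orbT.
Qed.

End Distance.

Lemma floor_eq_norm_lt1 (R : archiRealFieldType) (a b : R) :
  Num.floor a = Num.floor b -> `|a - b| < 1.
Proof.
move=> ab; have := floor_itv a; have := floor_itv b; rewrite ab !intrD.
by move=> /andP[? ?] /andP[? ?]; rewrite ltr_norml; apply/andP; split; lra.
Qed.

Section Tree.
Variables (R : realType) (d : nat) (P : seq 'rV[R]_d) (Mx : R) (p0 s : 'rV[R]_d).
Implicit Types x y : 'rV[R]_d.
Local Notation cell := (cell Mx p0 s).
Local Notation same_node := (same_node Mx p0 s).
Local Notation leaf_height := (leaf_height P Mx p0 s).
Local Notation TreeDist := (TreeDist P Mx p0 s).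

Lemma same_nodeC i x y : same_node i x y = same_node i y x.
Proof. by rewrite /Defs.same_node [cell i x == _]eq_sym. Qed.

Lemma edge_w_ge0 j : 0 <= Mx -> 0 <= edge_w d Mx j.
Proof. by move=> Mx_ge0; rewrite divr_ge0 ?exprn_ge0 ?mulr_ge0 ?sqrtr_ge0. Qed.

Lemma TreeDist_ge0 x y : 0 <= Mx -> 0 <= TreeDist x y.
Proof.
by move=> Mx_ge0; rewrite addr_ge0 // sumr_ge0 // => j _; rewrite mulr_ge0 ?edge_w_ge0.
Qed.

Lemma TreeDist_ge_edge x y i : 0 <= Mx ->
  (i < leaf_height x)%N -> (i < leaf_height y)%N -> ~~ same_node i.+1 x y ->
  2 * edge_w d Mx i <= TreeDist x y.
Proof.
move=> Mx_ge0 ix iy sep.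
pose F j := (~~ same_node j.+1 x y)%:R * edge_w d Mx j.
have Fi : F i = edge_w d Mx i by rewrite /F sep mul1r.
have term_le h : (i < h)%N -> F i <= \sum_(j < h) F j.
  move=> ih; rewrite (bigD1 (Ordinal ih)) //= lerDl sumr_ge0 // => j _.
  by rewrite mulr_ge0 ?edge_w_ge0.
by rewrite -Fi mulr_natl mulr2n; apply: lerD; apply: term_le.
Qed.

Section Separation.
Hypothesis Mx_gt0 : 0 < Mx.

Lemma eq_cell_norm_lt i x y j : cell i x = cell i y ->
  `|x ord0 j - y ord0 j| < 2 * Mx / 2 ^+ i.
Proof.
move/rowP/(_ j); rewrite !mxE => /floor_eq_norm_lt1.
rewrite (_ : _ - _ = (x ord0 j - y ord0 j) * (2 ^+ i / (2 * Mx))); last by ring.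
have scale_gt0 : 0 < 2 ^+ i / (2 * Mx) by rewrite divr_gt0 ?exprn_gt0 ?mulr_gt0.
by rewrite normrM (gtr0_norm scale_gt0) -ltr_pdivlMr // div1r invf_div.
Qed.

Lemma cell_eventually_neq x y : x != y ->
  exists i0, forall i, (i0 <= i)%N -> cell i x != cell i y.
Proof.
move=> xy; have [j xy_j] : exists j, x ord0 j != y ord0 j.
  case: (pickP (fun j => x ord0 j != y ord0 j)) => [j|none]; first by exists j.
  by case/eqP: xy; apply/rowP => j; apply/eqP/negbFE/none.
have gap_gt0 : 0 < `|x ord0 j - y ord0 j| by rewrite normr_gt0 subr_eq0.
exists (Num.truncn (2 * Mx / `|x ord0 j - y ord0 j|)).+1 => i i0i.
apply/eqP => /(eq_cell_norm_lt j); apply/negP; rewrite -leNgt.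
rewrite ler_pdivrMr ?exprn_gt0 // [_ * 2 ^+ i]mulrC -ler_pdivrMr //.
apply: le_trans (ltW (truncnS_gt _)) _.
by rewrite -natrX ler_nat (leq_trans i0i) // ltnW // ltn_expl.
Qed.

Lemma exists_leaf x : exists i, is_leaf P Mx p0 s i x.
Proof.
suff [i0 leaf] : exists i0, forall i, (i0 <= i)%N -> is_leaf P Mx p0 s i x.
  by exists i0; apply: leaf.
rewrite /is_leaf; elim: P => [|y P' [i1 IH]]; first by exists 0%N.
have [->|yx] := eqVneq y x; first by exists i1 => i /IH all_P'; rewrite /= eqxx.
have [i2 sep] := cell_eventually_neq yx.
exists (maxn (maxn i1 i2) 1) => i; rewrite !geq_max => /andP[/andP[i1i i2i] i_gt0] /=.
by rewrite IH // /Defs.same_node eqn0Ngt i_gt0 [cell i x == _]eq_sym (negbTE (sep i i2i)) orbT.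
Qed.

Lemma leaf_height_gt u v m : v \in P -> v != u ->
  (forall i, (i <= m)%N -> same_node i u v) -> (m < leaf_height u)%N.
Proof.
move=> vP vu same; rewrite /Defs.leaf_height; case: pselect => [e|]; last first.
  by case; exact: exists_leaf.
case: (ex_minnP e) => h /allP /(_ v vP) + _; rewrite (negbTE vu) /=.
by apply: contraNT; rewrite -leqNgt; exact: same.
Qed.

Lemma Dist_le_TreeDist x y : x \in P -> y \in P -> x != y -> Dist x y <= Mx ->
  Dist x y <= TreeDist x y.
Proof.
move=> xP yP xy DM; have [i0 sep] := cell_eventually_neq xy.
have sep_ex : exists i, ~~ same_node i.+1 x y by exists i0; rewrite /Defs.same_node sep.
case: (ex_minnP sep_ex) => i sep_i min_i.
have same h : (h <= i)%N -> same_node h x y.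
  by case: h => [//|h] hi; apply/negPn/negP => /min_i; rewrite leqNgt hi.
have ix : (i < leaf_height x)%N by apply: leaf_height_gt yP _ same; rewrite eq_sym.
have iy : (i < leaf_height y)%N.
  by apply: leaf_height_gt xP xy _ => h /same; rewrite same_nodeC.
apply: le_trans _ (TreeDist_ge_edge (ltW Mx_gt0) ix iy sep_i).
rewrite /edge_w (_ : 2 * _ = Num.sqrt d%:R * (2 * Mx / 2 ^+ i)); last by ring.
apply: Dist_le_sqrt_dim => [|j]; first by rewrite divr_ge0 ?exprn_ge0 ?mulr_ge0 ?ltW.
(* For [i = 0] the two points are only known to share the root node, not a
   grid cell, so [Dist x y <= Mx] stands in for [eq_cell_norm_lt]. *)
case: (posnP i) => [->|i_gt0].
  rewrite expr0 divr1; apply: le_trans (coord_le_Dist x y j) (le_trans DM _).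
  by rewrite mulr_natl mulr2n lerDl ltW.
apply/ltW/eq_cell_norm_lt/eqP.
by have := same i (leqnn i); rewrite /Defs.same_node eqn0Ngt i_gt0.
Qed.

End Separation.
End Tree.

Lemma Dist_le_MultiTreeDist (R : realType) (d : nat) (P : seq 'rV[R]_d) (Mx : R)
    (t1 t2 t3 : 'rV[R]_d * 'rV[R]_d) (x y : 'rV[R]_d) :
  MaxDist_ok P Mx -> x \in P -> y \in P -> Dist x y <= MultiTreeDist P Mx t1 t2 t3 x y.
Proof.
move=> [Mx_max _] xP yP; have DM := Mx_max x y xP yP; rewrite !le_min.
have Mx_ge0 := le_trans (Dist_ge0 x y) DM.
have [<-|xy] := eqVneq x y; first by rewrite Dist_xx !TreeDist_ge0.
have Mx_gt0 := lt_le_trans (Dist_gt0 xy) DM.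
by rewrite !Dist_le_TreeDist.
Qed.

Section NextAdded.
Variables (R : realType) (d : nat) (P : seq 'rV[R]_d) (samp acc : 'rV[R]_d -> R).
Local Notation success := (\sum_(y <- P) samp y * acc y).

Lemma next_added_prob_geometric x :
  0 <= samp x * acc x -> samp x * acc x <= success -> success <= 1 ->
  next_added_prob P samp acc x (samp x * acc x / success).
Proof.
rewrite /next_added_prob; set a := samp x * acc x; set q := success.
move=> a_ge0 a_le_q q_le1.
have [q0|q_neq0] := eqVneq q 0.
  have a0 : a = 0 by apply: le_anti; rewrite a_ge0 andbT -q0.
  rewrite a0 mul0r (_ : (fun N => _) = fun=> 0); first exact: cvg_cst.
  by apply/funext => N; rewrite big1 // => t _; rewrite mulr0.
have q_gt0 : 0 < q by rewrite lt_def q_neq0 (le_trans a_ge0).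
rewrite -[q in a / q](subKr 1).
rewrite (_ : (fun N => _) = series (geometric a (1 - q))).
  by apply: cvg_geometric_series; rewrite ger0_norm; lra.
apply/funext => N; rewrite /series /= big_mkord.
by apply: eq_bigr => t _; rewrite mulrC.
Qed.

Lemma next_added_prob_proportional (w : 'rV[R]_d -> R) (v : R) x :
  {in P, forall y, 0 <= w y} -> \sum_(y <- P) w y <= v ->
  {in P, forall y, samp y * acc y = w y / v} -> x \in P ->
  next_added_prob P samp acc x (w x / \sum_(y <- P) w y).
Proof.
move=> w_ge0 W_le_v trial xP; set W := \sum_(y <- P) w y in W_le_v *.
have W_ge0 : 0 <= W by rewrite /W big_seq sumr_ge0.
have v_ge0 := le_trans W_ge0 W_le_v.
have wx_le_W : w x <= W.
  rewrite /W (big_rem x xP) lerDl big_seq sumr_ge0 // => y /mem_rem; exact: w_ge0.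
have success_eq : success = W / v.
  by rewrite /W mulr_suml; apply: eq_big_seq => y /trial.
have ratio : w x / W = (w x / v) / (W / v).
  have [v0|v_neq0] := eqVneq v 0; last by rewrite invf_div -mulrA mulKf.
  have W0 : W = 0 by apply: le_anti; rewrite W_ge0 andbT -v0.
  by rewrite W0 v0 !(invr0, mulr0).
rewrite ratio -trial // -success_eq; apply: next_added_prob_geometric.
- by rewrite trial // divr_ge0 ?w_ge0.
- by rewrite trial // success_eq ler_wpM2r ?invr_ge0.
rewrite success_eq; have [->|v_neq0] := eqVneq v 0; first by rewrite invr0 mulr0.
by rewrite ler_pdivrMr ?mul1r // lt_def v_neq0.
Qed.

End NextAdded.

Section LaterSteps.
Variables (R : realType) (d : nat) (P S : seq 'rV[R]_d) (c Mx M0 : R).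
Variables (t1 t2 t3 : 'rV[R]_d * 'rV[R]_d) (Query : 'rV[R]_d -> 'rV[R]_d).
Hypotheses (Mx_ok : MaxDist_ok P Mx) (c_gt0 : 0 < c) (lsh : lsh_successful c S Query).
Hypotheses (S_sub_P : {subset S <= P}) (S_neq0 : S != [::]).
Local Notation mtd y := (seqmin (MultiTreeDist P Mx t1 t2 t3 y) S).

Lemma sqr_Dist_Query_le y : y \in P -> Dist y (Query y) ^+ 2 <= c ^+ 2 * mtd y ^+ 2.
Proof.
move=> yP; have D_le : Dist y (Query y) <= c * mtd y.
  apply: le_trans (proj2 (lsh y)) _; rewrite ler_pM2l //.
  by apply: le_seqmin2 => s /S_sub_P sP; exact: Dist_le_MultiTreeDist.
by have := Dist_ge0 y (Query y); nra.
Qed.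

Lemma MTsample_accept_prob y : y \in P ->
  MTsample P Mx M0 t1 t2 t3 S y * accept_prob P Mx M0 c t1 t2 t3 Query S y
  = Dist y (Query y) ^+ 2 / (c ^+ 2 * \sum_(z <- P) mtd z ^+ 2).
Proof.
move=> yP; have weightE z : MTweight P Mx M0 t1 t2 t3 S z = mtd z ^+ 2.
  by move: S_neq0; case: S.
have -> : accept_prob P Mx M0 c t1 t2 t3 Query S y
    = Num.min 1 (Dist y (Query y) ^+ 2 / (c ^+ 2 * mtd y ^+ 2)).
  by move: S_neq0; case: S.
rewrite /MTsample weightE; under eq_bigr do rewrite weightE.
set W := \sum_(z <- P) _; have D_le := sqr_Dist_Query_le yP.
have [m0|m_neq0] := eqVneq (mtd y) 0.
  have D0 : Dist y (Query y) ^+ 2 = 0.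
    by apply: le_anti; rewrite sqr_ge0 andbT; rewrite m0 expr0n mulr0 in D_le.
  by rewrite D0 m0 expr0n /= !mul0r.
have m_gt0 : 0 < mtd y ^+ 2 by rewrite lt_def sqrf_eq0 m_neq0 sqr_ge0.
have W_gt0 : 0 < W.
  apply: lt_le_trans m_gt0 _; rewrite /W (big_rem y yP) lerDl.
  by rewrite sumr_ge0 // => z _; rewrite sqr_ge0.
have cm_gt0 : 0 < c ^+ 2 * mtd y ^+ 2 := mulr_gt0 (exprn_gt0 2 c_gt0) m_gt0.
rewrite min_r; last by rewrite ler_pdivrMr ?mul1r.
by field; rewrite m_neq0 !gt_eqF.
Qed.

End LaterSteps.

Unset Implicit Arguments. Set Strict Implicit.

Theorem mainTheorem7 (R : realType) (d k : nat) (P : seq 'rV[R]_d)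
  (c Mx M0 : R) (t1 t2 t3 : 'rV[R]_d * 'rV[R]_d) :
  uniq P -> (0 < size P)%N -> 1 < c -> 0 < M0 ->
  MaxDist_ok P Mx ->
  tree_param_ok P Mx t1.1 t1.2 -> tree_param_ok P Mx t2.1 t2.2 ->
  tree_param_ok P Mx t3.1 t3.2 ->
  (* first addition, S = empty *)
  (forall (Query : 'rV[R]_d -> 'rV[R]_d) x, x \in P ->
     next_added_prob P (MTsample P Mx M0 t1 t2 t3 [::])
       (accept_prob P Mx M0 c t1 t2 t3 Query [::]) x (1 / (size P)%:R))
  /\
  (* later steps, S nonempty *)
  (forall (S : seq 'rV[R]_d) (Query : 'rV[R]_d -> 'rV[R]_d),
     uniq S -> {subset S <= P} -> S != [::] -> (size S < k)%N ->
     lsh_successful c S Query ->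
     forall x, x \in P ->
       next_added_prob P (MTsample P Mx M0 t1 t2 t3 S)
         (accept_prob P Mx M0 c t1 t2 t3 Query S) x
         (Dist x (Query x) ^+ 2 / \sum_(y <- P) Dist y (Query y) ^+ 2)).
Proof.
move=> _ P_gt0 c_gt1 M0_gt0 Mx_ok _ _ _.
split=> [Query x xP | S Query _ S_sub_P S_neq0 _ lsh x xP].
  have n_eq : (size P)%:R = \sum_(y <- P) 1 :> R by rewrite -sum1_size natr_sum.
  have n_neq0 : (size P)%:R != 0 :> R by rewrite pnatr_eq0 -lt0n.
  rewrite [in 1 / _]n_eq; apply: (next_added_prob_proportional (v := (size P)%:R)) => //.
  - by rewrite n_eq.
  move=> y _; rewrite /MTsample /= mulr1.
  rewrite (_ : \sum_(z <- P) M0 = M0 * (size P)%:R); last first.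
    by rewrite n_eq mulr_sumr; apply: eq_bigr => z _; rewrite mulr1.
  by field; rewrite n_neq0 gt_eqF.
have c_gt0 : 0 < c := lt_trans ltr01 c_gt1.
apply: (next_added_prob_proportional (v := c ^+ 2 * \sum_(z <- P)
    seqmin (MultiTreeDist P Mx t1 t2 t3 z) S ^+ 2)) => // [y _ | | y yP].
- exact: sqr_ge0.
- rewrite mulr_sumr big_seq [X in _ <= X]big_seq; apply: ler_sum => y yP.
  exact: sqr_Dist_Query_le.
exact: MTsample_accept_prob.
Qed.
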